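(* Let $R$ be a $*$-ring. The following are equivalent: (1) $R$ is strongly $\pi$-$*$-regular. (2) $R$ is $\pi$-regular and every idempotent of $R$ is a projection. (3) For every $a\in R$ there exist $n\geq 1$ and a projection $p\in R$ such that $a^nR=pR$, and $R$ is abelian. (4) For every $a\in R$ there exists $n\geq 1$ such that $a^n$ is strongly $*$-regular. (5) For every $a\in R$ there exist a projection $p$ and a unit $u$ of $R$ such that $a=p+u$ and $ap$ is nilpotent; and $v^{-1}qv$ is a projection for every unit $v\in U(R)$ and every projection $q$ of $R$.
   Context: Rings are associative with identity. A $*$-ring is a ring $R$ with a map $*:R\to R$ satisfying $(x+y)^*=x^*+y^*$, $(xy)^*=y^*x^*$, $(x^* )^*=x$. A projection is an element $p$ with $p^2=p=p^*$. $U(R)$ denotes the units of $R$. $R$ is abelian if all idempotents are central. $R$ is $\pi$-regular if for each $a\in R$ there exist $n\ge1$ and $b\in R$ with $a^n=a^nba^n$. An element $a$ is strongly $*$-regular if $a=pu=up$ for some projection $p$ and unit $u$. An element $a\in R$ is strongly $\pi$-$*$-regular if there exist a projection $e$, a unit $u$ and an integer $m\geq1$ such that $a^m=eu$ and $a,e,u$ pairwise commute; $R$ is strongly $\pi$-$*$-regular if every element is. *)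

From mathcomp Require Import all_boot all_algebra.
Set Implicit Arguments. Unset Strict Implicit. Unset Printing Implicit Defensive.
Import GRing.Theory.
Local Open Scope ring_scope.

(* Rings are associative with identity; the zero ring is not excluded,
   so we work over a pzRingType. *)

Definition is_star_ring (R : pzRingType) (star : R -> R) : Prop :=
  [/\ forall x y, star (x + y) = star x + star y,
      forall x y, star (x * y) = star y * star x &
      forall x, star (star x) = x].

Definition projection (R : pzRingType) (star : R -> R) (p : R) : Prop :=
  p * p = p /\ star p = p.

Definition is_unit (R : pzRingType) (u : R) : Prop :=
  exists v, u * v = 1 /\ v * u = 1.

Definition idempotent_elt (R : pzRingType) (e : R) : Prop := e * e = e.

Definition abelian_ring (R : pzRingType) : Prop :=
  forall e : R, idempotent_elt e -> forall x, e * x = x * e.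

Definition pi_regular (R : pzRingType) : Prop :=
  forall a : R, exists n : nat, (1 <= n)%N /\ exists b, a ^+ n = a ^+ n * b * a ^+ n.

Definition strongly_star_regular (R : pzRingType) (star : R -> R) (a : R) : Prop :=
  exists p u, [/\ projection star p, is_unit u, a = p * u & a = u * p].

Definition strongly_pi_star_regular_elt (R : pzRingType) (star : R -> R) (a : R) : Prop :=
  exists e u (m : nat), [/\ (1 <= m)%N, projection star e, is_unit u, a ^+ m = e * u &
    [/\ a * e = e * a, a * u = u * a & e * u = u * e]].

Definition strongly_pi_star_regular (R : pzRingType) (star : R -> R) : Prop :=
  forall a : R, strongly_pi_star_regular_elt star a.

Definition same_right_ideal (R : pzRingType) (x y : R) : Prop :=
  forall z, (exists r, z = x * r) <-> (exists r, z = y * r).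

Definition nilpotent_elt (R : pzRingType) (x : R) : Prop :=
  exists k : nat, x ^+ k = 0.

From mathcomp Require Import all_boot all_algebra.
Set Implicit Arguments. Unset Strict Implicit. Unset Printing Implicit Defensive.
Import GRing.Theory.
Local Open Scope ring_scope.

Definition central (R : pzRingType) (x : R) : Prop := forall y, GRing.comm x y.

(* Everything goes through condition (2).  If all idempotents are projections,
   then so is [e + e x (1 - e)] for every idempotent [e], which forces
   [e x (1 - e) = 0]: the ring is abelian.  In an abelian ring,
   [a^n = a^n b a^n] makes [e = a^n b] a central idempotent, with
   [a^n + (1 - e)] a unit and [e (a^n + (1 - e)) = a^n]; this gives (1), (3)
   and (4), and (5) follows by inverting [a - (1 - e)] separately on the two
   corners.  Conversely, under (5) every projection [q] is central, being
   conjugate to [q + q x (1 - q)], and then [a = p + u] with [a p] nilpotent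
   makes a power of [a] a unit times the central projection [1 - p]. *)

Section Idempotents.
Variable R : pzRingType.
Implicit Types a e l r u v x z : R.

Lemma idemC e : e * e = e -> (1 - e) * (1 - e) = 1 - e.
Proof. by move=> ee; rewrite mulrBr mulr1 mulrBl mul1r ee subrr subr0. Qed.

Lemma idem_mulC e : e * e = e -> e * (1 - e) = 0.
Proof. by move=> ee; rewrite mulrBr mulr1 ee subrr. Qed.

Lemma idemC_mul e : e * e = e -> (1 - e) * e = 0.
Proof. by move=> ee; rewrite mulrBl mul1r ee subrr. Qed.

Lemma idemXS e n : e * e = e -> e ^+ n.+1 = e.
Proof. by move=> ee; elim: n => [|n IHn]; rewrite ?expr1 // exprS IHn ee. Qed.

Lemma centralC e : central e -> central (1 - e).
Proof. by move=> ce y; rewrite /GRing.comm mulrBl mulrBr mul1r mulr1 ce. Qed.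

Lemma exprMn_central_idem x e n : central e -> e * e = e ->
  (x * e) ^+ n.+1 = x ^+ n.+1 * e.
Proof. by move=> ce ee; rewrite exprMn_comm ?(idemXS _ ee) //; apply/commr_sym/ce. Qed.

Lemma nilpotent_exprS x : nilpotent_elt x -> exists k, x ^+ k.+1 = 0.
Proof.
case=> -[|k] xk0; last by exists k.
by exists 0%N; rewrite expr1 -[x]mulr1 -(expr0 x) xk0 mulr0.
Qed.

Lemma nilpotent_idem_eq0 x : x * x = x -> nilpotent_elt x -> x = 0.
Proof. by move=> xx /nilpotent_exprS[k]; rewrite idemXS. Qed.

Lemma is_unit_lr x l r : l * x = 1 -> x * r = 1 -> is_unit x.
Proof.
move=> lx xr; have rl : r = l by rewrite -[l]mulr1 -xr mulrA lx mul1r.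
by exists r; split; rewrite // {1}rl.
Qed.

Lemma idem_unit_regular e u v : e * e = e -> u * v = 1 ->
  e * u = e * u * v * (e * u).
Proof. by move=> ee uv; rewrite -(mulrA e u v) uv mulr1 mulrA ee. Qed.

Lemma idem_unit_idem e u v : e * e = e -> u * v = 1 -> GRing.comm e u ->
  (e * u) * (e * u) = e * u -> e * u = e.
Proof.
move=> ee uv eu idem; have euu : e * u * u = e * u.
  by rewrite -{2}idem mulrA -(mulrA e u e) -eu mulrA ee.
by have := congr1 (fun t => t * v) euu; rewrite -!mulrA uv !mulr1.
Qed.

Lemma is_unit_corners e x l r z : central e -> e * e = e ->
  l * x * e = e -> x * r * e = e -> z * x * (1 - e) = 1 - e -> x * z * (1 - e) = 1 - e ->
  is_unit x.
Proof.
move=> ce ee lx xr zx xz; have cf := centralC ce.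
apply: (is_unit_lr (l := l * e + z * (1 - e)) (r := r * e + z * (1 - e))).
  by rewrite mulrDl -!mulrA (ce x) (cf x) !mulrA lx zx addrC subrK.
by rewrite mulrDr !mulrA xr xz addrC subrK.
Qed.

(* The inverse is assembled from an inverse of [a] in the corner [e] and the
   geometric series of [a] in the corner [1 - e], where [a] is nilpotent. *)
Lemma is_unit_subr_idemC a e l r n : central e -> e * e = e ->
  l * a * e = e -> a * r * e = e -> a ^+ n * (1 - e) = 0 -> is_unit (a - (1 - e)).
Proof.
move=> ce ee la ar an; have cf := centralC ce.
have fe : (1 - e) * e = 0 by exact: idemC_mul.
have af : (a - (1 - e)) * (1 - e) = (a - 1) * (1 - e).
  by rewrite mulrBl (idemC ee) [RHS]mulrBl mul1r.
have aS : (a - 1) * (\sum_(i < n) a ^+ i) = (\sum_(i < n) a ^+ i) * (a - 1).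
  apply: commr_sum => i _; apply: commrX.
  by rewrite /GRing.comm mulrBl mulrBr mul1r mulr1.
move: (\sum_(i < n) a ^+ i) (subrX1 a n) aS => S Sa aS.
apply: (is_unit_corners (l := l) (r := r) (z := - S) ce ee).
- by rewrite -mulrA mulrBl fe subr0 mulrA la.
- by rewrite 2!mulrBl ar (cf r) -mulrA fe mulr0 subr0.
- by rewrite !mulNr -mulrA af mulrA -aS -Sa mulrBl an mul1r sub0r opprK.
- rewrite mulrN mulNr -mulrA -(cf S) mulrA af -mulrA (cf S) mulrA -Sa.
  by rewrite mulrBl an mul1r sub0r opprK.
Qed.

Section Corner.
Variables (e x : R).
Hypothesis ee : e * e = e.
Local Notation N := (e * x * (1 - e)).

Lemma idem_corner_mull : e * N = N.
Proof. by rewrite !mulrA ee. Qed.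

Lemma idem_corner_mulr : N * e = 0.
Proof. by rewrite -mulrA idemC_mul // mulr0. Qed.

Lemma idem_corner_sqr : N * N = 0.
Proof. by rewrite !mulrA idem_corner_mulr !mul0r. Qed.

Lemma idem_add_corner : (e + N) * (e + N) = e + N.
Proof.
have := idem_corner_mull; have := idem_corner_mulr; have := idem_corner_sqr.
move: (e * x * (1 - e)) => N NN Ne eN.
by rewrite mulrDl !mulrDr ee eN Ne NN !addr0.
Qed.

Lemma conj_idem_corner : (1 - N) * e * (1 + N) = e + N.
Proof. by rewrite mulrBl mul1r idem_corner_mulr subr0 mulrDr mulr1 idem_corner_mull. Qed.

End Corner.

Lemma sqr0_addr1_subr1 x : x * x = 0 -> (1 + x) * (1 - x) = 1 /\ (1 - x) * (1 + x) = 1.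
Proof.
move=> xx; split.
  by rewrite mulrDl mul1r mulrBr mulr1 xx subr0 subrK.
by rewrite mulrBl mul1r mulrDr mulr1 xx addr0 addrK.
Qed.

End Idempotents.

Section AbelianRegular.
Variables (R : pzRingType) (c b : R).
Hypotheses (ab : abelian_ring R) (cbc : c = c * b * c).

Lemma regular_idem : c * b * (c * b) = c * b.
Proof. by rewrite mulrA -cbc. Qed.

Lemma regular_idem_central : central (c * b).
Proof. exact: ab regular_idem. Qed.

Lemma regular_mul_idem : c * (c * b) = c.
Proof. by rewrite -regular_idem_central; apply: esym. Qed.

(* Both [c b] and [b c] are central idempotents, and each absorbs the other. *)
Lemma regular_commr : b * c = c * b.
Proof.
have gg : b * c * (b * c) = b * c by rewrite -mulrA (mulrA c b c) -cbc.
have gc := ab gg.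
have g_eg : b * c = c * b * (b * c).
  by rewrite {1}cbc mulrA -regular_idem_central -mulrA.
have e_ge : c * b = b * c * (c * b).
  by rewrite {1}cbc -(mulrA c b c) -gc -mulrA.
by rewrite g_eg {2}e_ge gc.
Qed.

Lemma is_unit_regular_corner : is_unit (c + (1 - c * b)).
Proof.
have ce := regular_idem_central; have ee := regular_idem.
apply: (is_unit_corners (l := b) (r := b) (z := 1) ce ee).
- by rewrite mulrDr mulrDl regular_commr ee -(mulrA b) idemC_mul // mulr0 addr0.
- by rewrite mulrDl mulrDl ee -(mulrA (1 - _)) -(ce b) mulrA idemC_mul // mul0r addr0.
- by rewrite mul1r mulrDl idemC // mulrBr mulr1 regular_mul_idem subrr add0r.
- by rewrite mulr1 mulrDl idemC // mulrBr mulr1 regular_mul_idem subrr add0r.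
Qed.

Lemma regular_idem_mul_corner : c * b * (c + (1 - c * b)) = c.
Proof. by rewrite mulrDr -cbc idem_mulC ?addr0 // regular_idem. Qed.

End AbelianRegular.

Section StarRing.
Variables (R : pzRingType) (star : R -> R).
Hypothesis Hstar : is_star_ring star.

Lemma starD x y : star (x + y) = star x + star y. Proof. by case: Hstar. Qed.
Lemma starM x y : star (x * y) = star y * star x. Proof. by case: Hstar. Qed.
Lemma starK x : star (star x) = x. Proof. by case: Hstar. Qed.

Lemma star0 : star 0 = 0.
Proof. by apply: (@addrI _ (star 0)); rewrite -starD !addr0. Qed.

Lemma starN x : star (- x) = - star x.
Proof. by apply: (@addrI _ (star x)); rewrite -starD !subrr star0. Qed.

Lemma starB x y : star (x - y) = star x - star y.
Proof. by rewrite starD starN. Qed.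

Lemma star1 : star 1 = 1.
Proof. by rewrite -[star 1]mulr1 -{2}(starK 1) -starM mulr1 starK. Qed.

Lemma projectionC p : projection star p -> projection star (1 - p).
Proof. by case=> pp sp; split; rewrite ?idemC // starB star1 sp. Qed.

Lemma proj_corner_eq0 q x : projection star q ->
  star (q + q * x * (1 - q)) = q + q * x * (1 - q) -> q * x * (1 - q) = 0.
Proof.
case=> qq sq; rewrite starD sq => /addrI sN.
rewrite -(idem_corner_mull x qq) -sN !starM starB star1 sq mulrA idem_mulC //.
by rewrite mul0r.
Qed.

Lemma proj_central q : projection star q -> (forall x, q * x * (1 - q) = 0) -> central q.
Proof.
move=> [qq sq] corner0 x.
have corner0' : (1 - q) * x * q = 0.
  by have := congr1 star (corner0 (star x)); rewrite !starM starB star1 sq starK star0 mulrA.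
have qx : q * x = q * x * q.
  by apply/eqP; rewrite -subr_eq0 -{1}(mulr1 (q * x)) -mulrBr corner0.
have xq : x * q = q * x * q.
  by apply/eqP; rewrite -subr_eq0 -{1}(mul1r x) -mulrA -(mulrA q x q) -mulrBl mulrA corner0'.
by rewrite /GRing.comm qx xq.
Qed.

End StarRing.

Section Conditions.
Variables (R : pzRingType) (star : R -> R).

Definition idempotents_projections : Prop :=
  forall e : R, idempotent_elt e -> projection star e.

Definition power_ideals_projections : Prop :=
  forall a : R, exists n : nat, exists p : R,
    [/\ (1 <= n)%N, projection star p & same_right_ideal (a ^+ n) p].

Definition strongly_star_regular_powers : Prop :=
  forall a : R, exists n : nat, (1 <= n)%N /\ strongly_star_regular star (a ^+ n).

Definition proj_unit_decompositions : Prop :=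
  forall a : R, exists p u : R,
    [/\ projection star p, is_unit u, a = p + u & nilpotent_elt (a * p)].

Definition projections_conj_stable : Prop :=
  forall v vinv q : R, v * vinv = 1 -> vinv * v = 1 ->
    projection star q -> projection star (vinv * q * v).

End Conditions.

Section Implications.
Variables (R : pzRingType) (star : R -> R).
Hypothesis Hstar : is_star_ring star.

Lemma spsr_powers : strongly_pi_star_regular star -> strongly_star_regular_powers star.
Proof.
move=> spsr a; have [e [u [m [m1 pe ue am [_ _ eu]]]]] := spsr a.
by exists m; split=> //; exists e, u; split; rewrite // am eu.
Qed.

Lemma powers_regular_idempotents : strongly_star_regular_powers star ->
  pi_regular R /\ idempotents_projections star.
Proof.
move=> pw; split=> [a | f ff].
  have [n [n1 [p [u [pp [v [uv _]] ap _]]]]] := pw a.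
  by exists n; split=> //; exists v; rewrite ap; apply: idem_unit_regular pp.1 uv.
have [n [n1 [p [u [pp [v [uv _]] fp fu]]]]] := pw f.
case: n n1 fp fu => // n _; rewrite idemXS // => fp fu.
have pu : GRing.comm p u by rewrite /GRing.comm -fp -fu.
have pupu : p * u * (p * u) = p * u by rewrite -fp.
by rewrite fp (idem_unit_idem pp.1 uv pu pupu).
Qed.

Lemma abelian_idempotents_projections : idempotents_projections star -> abelian_ring R.
Proof.
move=> ip e ee; apply: (proj_central Hstar (ip e ee)) => x.
apply: (proj_corner_eq0 Hstar (ip e ee)); apply: (ip _ _).2.
exact: idem_add_corner.
Qed.

Lemma regular_spsr : pi_regular R -> idempotents_projections star ->
  strongly_pi_star_regular star.
Proof.
move=> reg ip a; have ab := abelian_idempotents_projections ip.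
have [n [n1 [b cbc]]] := reg a.
have ce := regular_idem_central ab cbc.
exists (a ^+ n * b), (a ^+ n + (1 - a ^+ n * b)), n; split=> //.
- exact/ip/regular_idem.
- exact: is_unit_regular_corner.
- by rewrite regular_idem_mul_corner.
split; [exact/esym/ce | | exact: ce].
apply: commrD; first exact/commrX/commr_refl.
by apply: commrB; [exact: commr1 | apply/commr_sym/ce].
Qed.

Lemma regular_power_ideals : pi_regular R -> idempotents_projections star ->
  power_ideals_projections star.
Proof.
move=> reg ip a; have [n [n1 [b cbc]]] := reg a.
exists n, (a ^+ n * b); split=> //; first exact/ip/regular_idem.
move=> z; split=> -[r ->]; last by exists (b * r); rewrite mulrA.
by exists (a ^+ n * r); rewrite mulrA -cbc.
Qed.

Lemma power_ideals_powers : power_ideals_projections star -> abelian_ring R ->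
  strongly_star_regular_powers star.
Proof.
move=> pip ab a; have [n [p [n1 pp ideal]]] := pip a.
exists n; split=> //; move: ideal; set c := a ^+ n => ideal.
have [x cpx] : exists x, c = p * x by apply/(ideal c).1; exists 1; rewrite mulr1.
have [y pcy] : exists y, p = c * y by apply/(ideal p).2; exists 1; rewrite mulr1.
have cyc : c = c * y * c by rewrite -pcy {2}cpx mulrA pp.1 -cpx.
exists p, (c + (1 - p)); rewrite pcy; split.
- by rewrite -pcy.
- exact: is_unit_regular_corner.
- by rewrite regular_idem_mul_corner.
- by rewrite -(regular_idem_central ab cyc) regular_idem_mul_corner.
Qed.

Lemma regular_decompositions : pi_regular R -> idempotents_projections star ->
  proj_unit_decompositions star.
Proof.
move=> reg ip a; have ab := abelian_idempotents_projections ip.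
have [n [n1 [b cbc]]] := reg a; case: n n1 cbc => // k _ cbc.
have ee := regular_idem cbc; have ce := regular_idem_central ab cbc.
have an : a ^+ k.+1 * (1 - a ^+ k.+1 * b) = 0.
  by rewrite mulrBr mulr1 regular_mul_idem // subrr.
exists (1 - a ^+ k.+1 * b), (a - (1 - a ^+ k.+1 * b)); split.
- exact/(projectionC Hstar)/ip.
- apply: (is_unit_subr_idemC (l := b * a ^+ k) (r := a ^+ k * b) ce ee _ _ an).
    by rewrite -(mulrA b) -exprSr (regular_commr ab cbc) ee.
  by rewrite (mulrA a) -exprS ee.
- by rewrite addrC subrK.
- by exists k.+1; rewrite exprMn_central_idem ?idemC //; apply: centralC.
Qed.

Lemma idempotents_projections_conj_stable : idempotents_projections star ->
  projections_conj_stable star.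
Proof.
move=> ip v vinv q vvinv _ [qq _]; apply: ip.
by rewrite /idempotent_elt -!mulrA (mulrA v vinv) vvinv mul1r (mulrA q q) qq.
Qed.

(* [q + q x (1 - q)] is the conjugate of [q] by the unit [1 + q x (1 - q)]. *)
Lemma conj_stable_projections_central : projections_conj_stable star ->
  forall q, projection star q -> central q.
Proof.
move=> cs q pq; apply: (proj_central Hstar pq) => x.
apply: (proj_corner_eq0 Hstar pq).
have [inv1 inv2] := sqr0_addr1_subr1 (idem_corner_sqr x pq.1).
by have [_] := cs _ _ q inv1 inv2 pq; rewrite conj_idem_corner ?pq.1.
Qed.

Lemma decompositions_regular_idempotents : projections_conj_stable star ->
  proj_unit_decompositions star -> pi_regular R /\ idempotents_projections star.
Proof.
move=> cs dec; have pc := conj_stable_projections_central cs.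
split=> [a | f ff].
  have [p [u [pp [v [uv vu]] apu /nilpotent_exprS[k apk]]]] := dec a.
  have cq := centralC (pc p pp); have qq := idemC pp.1.
  have ap0 : a ^+ k.+1 * p = 0 by rewrite -(exprMn_central_idem a k (pc p pp) pp.1).
  have aq : a * (1 - p) = u * (1 - p) by rewrite apu mulrDl idem_mulC ?pp.1 // add0r.
  have an : a ^+ k.+1 = (1 - p) * u ^+ k.+1.
    rewrite (cq (u ^+ k.+1)) -exprMn_central_idem // -aq exprMn_central_idem //.
    by rewrite mulrBr mulr1 ap0 subr0.
  have uvn : u ^+ k.+1 * v ^+ k.+1 = 1.
    by rewrite -exprMn_comm ?uv ?expr1n // /GRing.comm uv vu.
  by exists k.+1; split=> //; exists (v ^+ k.+1); rewrite an; apply: idem_unit_regular.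
have [p [u [pp [v [uv _]] fpu fpnil]]] := dec f.
have cp := pc p pp; have cq := centralC cp; have qq := idemC pp.1.
have fp0 : f * p = 0.
  apply: nilpotent_idem_eq0 fpnil.
  by rewrite -mulrA (mulrA p f p) cp -mulrA pp.1 mulrA ff.
have fq : f = (1 - p) * u.
  rewrite (cq u) -[LHS]subr0 -fp0 -{1}(mulr1 f) -mulrBr {1}fpu mulrDl.
  by rewrite idem_mulC ?pp.1 // add0r.
have quqn : (1 - p) * u * ((1 - p) * u) = (1 - p) * u by rewrite -fq.
by rewrite fq (idem_unit_idem qq uv (cq u) quqn); apply: projectionC.
Qed.

End Implications.

Theorem theorem3p6 (R : pzRingType) (star : R -> R) (Hstar : is_star_ring star) :
  [<->
   (* (1) *) strongly_pi_star_regular star;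
   (* (2) *) pi_regular R /\ (forall e : R, idempotent_elt e -> projection star e);
   (* (3) *) (forall a : R, exists n : nat, exists p : R,
                [/\ (1 <= n)%N, projection star p & same_right_ideal (a ^+ n) p])
             /\ abelian_ring R;
   (* (4) *) (forall a : R, exists n : nat, (1 <= n)%N /\ strongly_star_regular star (a ^+ n));
   (* (5) *) (forall a : R, exists p u : R,
                [/\ projection star p, is_unit u, a = p + u & nilpotent_elt (a * p)])
             /\ (forall v vinv q : R, v * vinv = 1 -> vinv * v = 1 ->
                   projection star q -> projection star (vinv * q * v))].
Proof.
tfae.
- by move=> spsr; apply/powers_regular_idempotents/spsr_powers.
- move=> [reg ip]; split; first exact: regular_power_ideals.
  exact: abelian_idempotents_projections Hstar ip.
- by move=> [pip ab]; apply: power_ideals_powers.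
- move=> /powers_regular_idempotents[reg ip]; split.
    exact: regular_decompositions.
  exact: idempotents_projections_conj_stable.
- move=> [dec cs]; have [reg ip] := decompositions_regular_idempotents Hstar cs dec.
  exact: regular_spsr.
Qed.
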